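(* Let $A$ be a finite nonempty alphabet and $\zeta:A^\omega\to A^\omega$ a bijective $\omega$-sequential function. Then for every finite word $u\in A^*$ the remainder $\zeta_u$ is a bijection.
   Context: For an infinite word $z$, $z[0,n]$ is its prefix of length $n$. A map $\zeta:A^\omega\to A^\omega$ is $\omega$-sequential if whenever a finite word $u$ is a common prefix of $x$ and $y$, then $\zeta(x)[0,|u|]=\zeta(y)[0,|u|]$. For such $\zeta$ and $u\in A^*$, one has $\zeta(ux)=\epsilon(u)\zeta_u(x)$ for all $x\in A^\omega$, where $\epsilon(u)=\zeta(ux)[0,|u|]$ does not depend on $x$ and $\zeta_u:A^\omega\to A^\omega$; $\zeta_u$ is called the remainder of $\zeta$ for $u$. *)

From mathcomp Require Import all_boot.
Set Implicit Arguments. Unset Strict Implicit. Unset Printing Implicit Defensive.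

Definition iword (A : Type) := nat -> A.

Definition pref (A : Type) (z : iword A) (n : nat) : seq A := mkseq z n.

Definition icat (A : Type) (u : seq A) (x : iword A) : iword A :=
  fun n => if n < size u then nth (x 0) u n else x (n - size u).

Definition omega_sequential (A : eqType) (zeta : iword A -> iword A) : Prop :=
  forall (u : seq A) (x y : iword A),
    pref x (size u) = u -> pref y (size u) = u ->
    pref (zeta x) (size u) = pref (zeta y) (size u).

(* The remainder zeta_u : the unique map with zeta (u x) = eps(u) zeta_u(x),
   where eps(u) = zeta(u x)[0,|u|]; i.e. zeta_u(x) is zeta(u x) with its first
   |u| letters dropped. *)
Definition remainder (A : Type) (zeta : iword A -> iword A) (u : seq A)
  : iword A -> iword A :=
  fun x n => zeta (icat u x) (size u + n).

From mathcomp Require Import all_boot.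
From Stdlib Require Import FunctionalExtensionality.

Set Implicit Arguments.
Unset Strict Implicit.
Unset Printing Implicit Defensive.

(* By sequentiality, x[0,n] |-> zeta(x)[0,n] is a well-defined map
   A^n -> A^n; it is onto because zeta is, hence one-to-one because A^n is
   finite.  So zeta(x)[0,n] determines x[0,n].  Injectivity of zeta_u follows
   because zeta(u x) is determined by eps(u) and zeta_u(x); for surjectivity,
   the preimage y of eps(u) w starts with u, so y = u y' and zeta_u(y') = w. *)

Lemma fin_surj_inj (T : finType) (f : T -> T) :
  (forall y, exists x, f x = y) -> injective f.
Proof.
move=> f_surj x y; suff /image_injP f_inj : #|[seq f z | z in T]| == #|T|.
  exact: f_inj.
rewrite eqn_leq max_card; apply/subset_leq_card/subsetP => z _.
by have [t <-] := f_surj z; apply: image_f.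
Qed.

Section InfiniteWords.

Variable A : Type.
Implicit Types (x y : iword A) (u : seq A) (n : nat).

Definition idrop n x : iword A := fun k => x (n + k).

Lemma size_pref x n : size (pref x n) == n.
Proof. by rewrite size_mkseq. Qed.

Lemma pref_icat n u x : size u = n -> pref (icat u x) n = u.
Proof.
move=> <-; apply: (@eq_from_nth _ (x 0)); rewrite size_mkseq // => i lt_i_u.
by rewrite nth_mkseq // /icat lt_i_u.
Qed.

Lemma idrop_icat n u x : size u = n -> idrop n (icat u x) = x.
Proof.
move=> <-; apply: functional_extensionality => k.
by rewrite /idrop /icat ltnNge leq_addr addKn.
Qed.

Lemma icat_inj u : injective (icat u).
Proof. by move=> x y e; rewrite -(@idrop_icat _ u x erefl) e idrop_icat. Qed.

Lemma icat_pref_idrop n x : icat (pref x n) (idrop n x) = x.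
Proof.
apply: functional_extensionality => m; rewrite /icat /idrop size_mkseq.
by case: ltnP => [lt_mn | le_nm]; rewrite ?nth_mkseq ?subnKC.
Qed.

Lemma pref_idrop_eq n x y :
  pref x n = pref y n -> idrop n x = idrop n y -> x = y.
Proof. by move=> ep ed; rewrite -(icat_pref_idrop n x) ep ed icat_pref_idrop. Qed.

End InfiniteWords.

Definition pref_tuple (A : Type) (x : iword A) n : n.-tuple A :=
  Tuple (size_pref x n).

Section BijectiveSequential.

Variables (A : finType) (zeta g : iword A -> iword A).
Hypothesis zeta_seq : omega_sequential zeta.
Hypotheses (zetaK : cancel zeta g) (gK : cancel g zeta).
Implicit Types (x y w : iword A) (u : seq A) (n : nat).

Lemma pref_sequential n x y :
  pref x n = pref y n -> pref (zeta x) n = pref (zeta y) n.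
Proof. by move=> e; have := @zeta_seq (pref x n) x y; rewrite size_mkseq; apply. Qed.

Lemma pref_zeta_inj n x y :
  pref (zeta x) n = pref (zeta y) n -> pref x n = pref y n.
Proof.
pose F (t : n.-tuple A) := pref_tuple (zeta (icat t x)) n.
have F_pref z : F (pref_tuple z n) = pref_tuple (zeta z) n.
  by apply/val_inj/pref_sequential/pref_icat; rewrite size_mkseq.
have F_inj : injective F.
  apply: fin_surj_inj => s; exists (pref_tuple (g (icat s x)) n).
  by apply: val_inj; rewrite F_pref /= gK pref_icat ?size_tuple.
move=> e; have /(congr1 val) // : pref_tuple x n = pref_tuple y n.
by apply: F_inj; rewrite !F_pref; apply: val_inj.
Qed.

Lemma remainder_inj u : injective (remainder zeta u).
Proof.
move=> x1 x2 e; apply/(icat_inj (u := u))/(can_inj zetaK).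
apply: (pref_idrop_eq (n := size u)) e.
by apply/pref_sequential; rewrite !pref_icat.
Qed.

(* The prefix [pref (zeta (icat u w)) (size u)] is eps(u); it does not
   depend on [w]. *)
Definition remainder_inv u w : iword A :=
  idrop (size u) (g (icat (pref (zeta (icat u w)) (size u)) w)).

Lemma remainder_invK u : cancel (remainder_inv u) (remainder zeta u).
Proof.
move=> w; rewrite /remainder_inv; set y := g _.
have pref_y : pref y (size u) = pref (icat u w) (size u).
  by apply: pref_zeta_inj; rewrite gK pref_icat ?size_mkseq.
rewrite pref_icat // in pref_y.
rewrite /remainder -[u in icat u _]pref_y icat_pref_idrop gK.
by apply: idrop_icat; rewrite size_mkseq.
Qed.

End BijectiveSequential.

Theorem lemma4p6 (A : finType) (hA : 0 < #|A|) (zeta : iword A -> iword A) :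
  omega_sequential zeta -> bijective zeta ->
  forall u : seq A, bijective (remainder zeta u).
Proof.
move=> zeta_seq [g zetaK gK] u.
have invK := remainder_invK zeta_seq gK u.
exists (remainder_inv zeta g u) => //.
exact: inj_can_sym invK (remainder_inj zeta_seq zetaK (u := u)).
Qed.
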